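(* Let $n$ be a nonzero integer and let $q(t)=n(t+t^{-1})+1-2n$. Then there exist a prime $p$ and integers $m,\ell$ coprime to $p$, such that if $p$ is odd then $p$ is coprime to $1-4m$ and $1-4m$ is a quadratic nonresidue modulo $p$, and such that $q(t)\in S_{p,m,\ell}$, if and only if $1-4n$ is not a perfect square.
   Context: For a prime $p$ and integers $m,\ell$, define the set of Laurent polynomials $$S_{p,m,\ell}=\{m(t+t^{-1})+1-2m\}\cup\{(m+\ell p^{2s+1})(t+t^{-1})+1-2(m+\ell p^{2s+1}) : s\in\mathbb{Z},\ s\geq 0\}.$$ An integer $x$ is a quadratic nonresidue modulo $p$ if $x\not\equiv y^2 \pmod p$ for all integers $y$. A perfect square means $k^2$ for some integer $k$ (so negative integers are not perfect squares). *)

From mathcomp Require Import all_boot all_order all_algebra.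
Set Implicit Arguments. Unset Strict Implicit. Unset Printing Implicit Defensive.
Import Order.TTheory GRing.Theory Num.Theory.
Local Open Scope ring_scope.

(* Integer Laurent polynomials in t, represented by their coefficient
   function: (f k) is the coefficient of t^k (k : int). *)
Definition laurent := int -> int.

Definition symq (c : int) : laurent :=
  fun k => if (k == 1) || (k == -1) then c
           else if k == 0 then 1 - 2 * c else 0.

Definition S_set (p : nat) (m l : int) : laurent -> Prop :=
  fun f => f = symq m \/
           exists s : nat, f = symq (m + l * (p%:Z) ^+ (2 * s + 1)).

Definition qnr (x : int) (p : nat) : Prop :=
  forall y : int, ~ (x = y ^+ 2 %[mod p%:Z])%Z.

Definition perfect_square (x : int) : Prop := exists k : int, x = k ^+ 2.

From mathcomp Require Import all_boot all_order all_algebra cyclic finfield.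
From mathcomp Require Import zify ring.
Set Implicit Arguments. Unset Strict Implicit. Unset Printing Implicit Defensive.
Import Order.TTheory GRing.Theory Num.Theory.
Local Open Scope ring_scope.

(* If [q(t)] lies in [S_{p,m,l}] then [n = m] modulo [p], hence [1 - 4n = 1 - 4m]
   modulo [p].  For [p = 2] this makes [n] odd, and [1 - 4n = 5] modulo 8 is not a
   square; for odd [p], [1 - 4n] is a nonresidue modulo [p], so again not a square.
   Conversely, if [D = 1 - 4n] is not a square, some odd prime [p] has [(D/p) = -1],
   and [p], [m = n], [l = 1] witness membership.  That prime comes from quadratic
   reciprocity (proved via Gauss's lemma and Eisenstein's lattice-point count):
   [D = 1] modulo 4 is the product of the [q* = (-1)^((q-1)/2) q] over the prime
   factors [q] of [D]; some [q1] occurs to an odd power, the Chinese remainder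
   theorem gives an odd [b] that is a nonresidue modulo [q1] and [1] modulo the other
   [q], and then [(D/p) = -1] for some prime factor [p] of [b]. *)

Lemma odd_halfE n : odd n -> n = (n./2 * 2).+1.
Proof. by move=> n_odd; rewrite -{1}(odd_double_half n) n_odd add1n -muln2. Qed.

Lemma odd_predE n : odd n -> n.-1 = (n./2 * 2)%N.
Proof. by move/odd_halfE => {1}->. Qed.

Lemma prime_ndvd_mul p q k : prime p -> ~~ (p %| q)%N -> (0 < k < p)%N ->
  ~~ (p %| q * k)%N.
Proof. by move=> p_pr p_ndvd /andP[k_gt0 k_lt]; rewrite Euclid_dvdM // negb_or p_ndvd gtnNdvd. Qed.

Section EulerCriterion.
Variable p : nat.
Hypotheses (p_pr : prime p) (p_odd : odd p).

Lemma odd_prime_half_gt0 : (0 < p./2)%N.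
Proof. by have := odd_prime_gt2 p_odd p_pr; have := odd_predE p_odd; lia. Qed.

Lemma Fp_fermat (x : 'F_p) : x != 0 -> x ^+ p.-1 = 1.
Proof.
move=> x_nz; apply: (mulIf x_nz); rewrite mul1r -exprSr prednK ?prime_gt0 //.
by rewrite -{2}(expf_card x) card_Fp.
Qed.

Lemma Fp_prim_root : exists g : 'F_p, p.-1.-primitive_root g.
Proof.
have p1_gt0 : (0 < p.-1)%N by have := odd_prime_gt2 p_odd p_pr; lia.
have units_roots : all p.-1.-unity_root (enum (predC1 (0 : 'F_p))).
  by apply/allP => x; rewrite mem_enum unity_rootE => /Fp_fermat ->.
have units_size : (p.-1 <= size (enum (predC1 (0%R : 'F_p))))%N.
  by rewrite -cardE cardC1 card_Fp.
have /hasP[g _ g_prim] := has_prim_root p1_gt0 units_roots (enum_uniq _) units_size.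
by exists g.
Qed.

Lemma Fp_euler_criterion (x : 'F_p) : x != 0 ->
  [exists y : 'F_p, y * y == x] = (x ^+ p./2 == 1).
Proof.
move=> x_nz; apply/existsP/eqP => [[y /eqP yyx] | x_half].
  have y_nz : y != 0 by apply: contraNneq x_nz => y0; rewrite -yyx y0 mul0r.
  by rewrite -yyx -expr2 -exprM mulnC -(odd_predE p_odd) Fp_fermat.
have [g g_prim] := Fp_prim_root.
have [i xE] := prim_rootP g_prim (Fp_fermat x_nz).
move: x_half; rewrite xE -exprM => /eqP; rewrite -(prim_order_dvd g_prim) => dvd_i.
have : (2 * p./2 %| i * p./2)%N by rewrite mulnC -(odd_predE p_odd).
rewrite dvdn_pmul2r ?odd_prime_half_gt0 // => /dvdnP[j ->].
by exists (g ^+ j); rewrite -expr2 -exprM mulnC.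
Qed.

Lemma Fp_expr_half_sign (x : 'F_p) : x != 0 -> x ^+ p./2 = 1 \/ x ^+ p./2 = -1.
Proof.
move=> x_nz; have : (x ^+ p./2) ^+ 2 == 1 by rewrite -exprM -(odd_predE p_odd) Fp_fermat.
by rewrite sqrf_eq1 => /orP[] /eqP; [left | right].
Qed.

End EulerCriterion.

Definition legendre (p : nat) (z : int) : int :=
  if (p%:Z %| z)%Z then 0 else if [exists y : 'F_p, y * y == z%:~R] then 1 else -1.

Lemma legendre_dvd p z : (p%:Z %| z)%Z -> legendre p z = 0.
Proof. by rewrite /legendre => ->. Qed.

Lemma legendre_cases p z : [\/ legendre p z = 0, legendre p z = 1 | legendre p z = -1].
Proof. by rewrite /legendre; case: ifP => _; [constructor 1 | case: ifP; constructor]. Qed.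

Section Legendre.
Variable p : nat.
Hypotheses (p_pr : prime p) (p_odd : odd p).

Lemma Fp_intr_eq0 (z : int) : ((z%:~R : 'F_p) == 0) = (p%:Z %| z)%Z.
Proof. by rewrite (dvdz_pcharf (pchar_Fp p_pr)). Qed.

Lemma Fp_nat_eq0 n : ((n%:R : 'F_p) == 0) = (p %| n)%N.
Proof. by rewrite (dvdn_pcharf (pchar_Fp p_pr)). Qed.

Lemma legendre_Fp z : (legendre p z)%:~R = (z%:~R : 'F_p) ^+ p./2.
Proof.
rewrite /legendre -Fp_intr_eq0; case: eqP => [-> | /eqP z_nz].
  by rewrite expr0n gtn_eqF ?odd_prime_half_gt0.
rewrite Fp_euler_criterion //; case: eqP => // /eqP half_neq1.
by case: (Fp_expr_half_sign p_pr p_odd z_nz) => half_z; rewrite half_z // eqxx in half_neq1.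
Qed.

Lemma Fp_intr_inj_small (x y : int) : `|x| <= 1 -> `|y| <= 1 ->
  (x%:~R : 'F_p) = y%:~R -> x = y.
Proof.
move=> x_le1 y_le1 /eqP; rewrite -subr_eq0 -rmorphB /= Fp_intr_eq0 dvdzE /= => p_dvd.
have xy_le2 : `|x - y| <= 2 by apply: le_trans (ler_normB _ _) (lerD x_le1 y_le1).
have p_gt2 := odd_prime_gt2 p_odd p_pr.
apply/eqP; rewrite -subr_eq0 -absz_eq0.
by apply: contraTT p_dvd => xy_nz; rewrite gtnNdvd ?lt0n //; lia.
Qed.

Lemma legendre_norm_le1 z : `|legendre p z| <= 1.
Proof. by case: (legendre_cases p z) => ->. Qed.

Lemma legendre_modz a b : (a = b %[mod p%:Z])%Z -> legendre p a = legendre p b.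
Proof.
move/eqP; rewrite eqz_mod_dvd -Fp_intr_eq0 rmorphB /= subr_eq0 => /eqP ab.
by apply: Fp_intr_inj_small; rewrite ?legendre_norm_le1 // !legendre_Fp ab.
Qed.

Lemma legendreM a b : legendre p (a * b) = legendre p a * legendre p b.
Proof.
apply: Fp_intr_inj_small; rewrite ?legendre_norm_le1 //.
  by rewrite normrM mulr_ile1 ?normr_ge0 ?legendre_norm_le1.
by rewrite rmorphM /= !legendre_Fp rmorphM /= exprMn.
Qed.

Lemma legendre1 : legendre p 1 = 1.
Proof. by apply: Fp_intr_inj_small; rewrite ?legendre_norm_le1 // legendre_Fp expr1n. Qed.

Lemma legendreN1 : legendre p (-1) = (-1) ^+ p./2.
Proof.
apply: Fp_intr_inj_small; rewrite ?legendre_norm_le1 ?normr_sign //.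
by rewrite legendre_Fp rmorphXn /= rmorphN1.
Qed.

Lemma legendreX z k : legendre p (z ^+ k) = legendre p z ^+ k.
Proof. by elim: k => [|k IHk]; rewrite ?legendre1 // !exprS legendreM IHk. Qed.

Lemma exists_legendre_eqN1 : exists r : int, legendre p r = -1.
Proof.
have [g g_prim] := Fp_prim_root p_pr p_odd.
have gE : (val g)%:Z%:~R = g :> 'F_p by rewrite -pmulrn natr_Zp.
have g_nz : g != 0.
  by rewrite (prim_root_eq0 g_prim) -lt0n; have := odd_prime_gt2 p_odd p_pr; lia.
exists (val g)%:Z; case: (legendre_cases p (val g)%:Z) => // [|leg_g1].
  by rewrite /legendre -Fp_intr_eq0 gE (negbTE g_nz); case: ifP.
have : (legendre p (val g)%:Z)%:~R = 1 :> 'F_p by rewrite leg_g1.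
rewrite legendre_Fp gE => /eqP; rewrite -(prim_order_dvd g_prim) => /dvdn_leq.
by have := odd_prime_half_gt0 p_pr p_odd; have := odd_predE p_odd; lia.
Qed.

Lemma legendre_eqN1_qnr z : legendre p z = -1 -> qnr z p /\ coprimez z p.
Proof.
rewrite /legendre; case: ifP => // p_ndvd; case: existsP => // not_sqr _; split.
  move=> y /eqP; rewrite eqz_mod_dvd -Fp_intr_eq0 rmorphB /= subr_eq0 => /eqP zy.
  by apply: not_sqr; exists y%:~R; rewrite zy rmorphXn /= expr2.
by move: p_ndvd; rewrite coprimezE /= coprime_sym prime_coprime // dvdzE => ->.
Qed.

End Legendre.

Section GaussLemma.
Variables (p a : nat).
Hypotheses (p_pr : prime p) (p_odd : odd p) (p_ndvd_a : ~~ (p %| a)%N).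

Let h := p./2.

Let pE : p = (h * 2).+1 := odd_halfE p_odd.

Let res k := ((a * k.+1) %% p)%N.
Let fold k := if (res k <= h)%N then res k else (p - res k)%N.

Lemma gauss_res_lt k : (res k < p)%N.
Proof. by rewrite ltn_mod prime_gt0. Qed.

Lemma gauss_res_gt0 k : (k < h)%N -> (0 < res k)%N.
Proof.
move=> k_lt; rewrite lt0n /res -/(dvdn p _) prime_ndvd_mul //; lia.
Qed.

Lemma gauss_fold_bound k : (k < h)%N -> (0 < fold k <= h)%N.
Proof.
move=> k_lt; have := gauss_res_gt0 k_lt; have := gauss_res_lt k.
by rewrite /fold; case: ifP; lia.
Qed.

Lemma gauss_fold_Fp k :
  ((a * k.+1)%:R : 'F_p) = (-1) ^+ (h < res k)%N * (fold k)%:R.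
Proof.
rewrite /fold -(Fp_nat_mod p_pr) -/(res k); case: leqP => _ /=.
  by rewrite mul1r.
rewrite expr1 natrB; last exact: ltnW (gauss_res_lt k).
by rewrite (pchar_Fp_0 p_pr) sub0r mulN1r opprK.
Qed.

(* [fold k] is the absolute value of the residue of [a (k + 1)] in [-h..h]; equal
   values give [k + 1 = +-(k' + 1)] modulo [p], which forces [k = k']. *)
Lemma gauss_fold_inj k k' : (k < h)%N -> (k' < h)%N -> fold k = fold k' -> k = k'.
Proof.
move=> k_lt k'_lt fold_eq.
have a_nz : (a%:R : 'F_p) != 0 by rewrite (Fp_nat_eq0 p_pr).
have sign_sqr (b : bool) : ((-1) ^+ b : 'F_p) * (-1) ^+ b = 1.
  by rewrite -expr2 sqrr_sign.
have : ((a * k.+1)%:R : 'F_p) * (-1) ^+ (h < res k)%N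
     = ((a * k'.+1)%:R : 'F_p) * (-1) ^+ (h < res k')%N.
  by rewrite !gauss_fold_Fp fold_eq mulrC mulrA sign_sqr mul1r mulrC mulrA sign_sqr mul1r.
have Fp_succ_inj : (k.+1%:R : 'F_p) = k'.+1%:R -> k = k'.
  move/(congr1 val); rewrite /= !(val_Fp_nat p_pr) !modn_small; lia.
have Fp_succ_opp : (a%:R * (k.+1 + k'.+1)%:R : 'F_p) = 0 -> k = k'.
  move/eqP; rewrite mulf_eq0 (negbTE a_nz) /= (Fp_nat_eq0 p_pr) => /dvdn_leq; lia.
rewrite !natrM; case: (h < res k)%N; case: (h < res k')%N;
  rewrite ?expr1 ?expr0 ?mulr1 ?mulrN1.
- by move/oppr_inj/(mulfI a_nz).
- by move=> e; apply: Fp_succ_opp; rewrite natrD mulrDr -e addrN.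
- by move=> e; apply: Fp_succ_opp; rewrite natrD mulrDr e addNr.
- by move/(mulfI a_nz).
Qed.

Lemma gauss_fold_pred_lt (k : 'I_h) : ((fold k).-1 < h)%N.
Proof. by have := gauss_fold_bound (ltn_ord k); lia. Qed.

Let fold_ord (k : 'I_h) : 'I_h := Ordinal (gauss_fold_pred_lt k).

Lemma gauss_fold_ordE (k : 'I_h) : (fold_ord k).+1 = fold k.
Proof. by rewrite /=; have := gauss_fold_bound (ltn_ord k); lia. Qed.

Lemma gauss_fold_ord_inj : injective fold_ord.
Proof.
move=> k k' eq_kk'; apply/val_inj/gauss_fold_inj; rewrite ?ltn_ord //.
by rewrite -!gauss_fold_ordE eq_kk'.
Qed.

Lemma big_gauss_fold (R : Type) (idx : R) (op : Monoid.com_law idx) (F : nat -> R) :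
  \big[op/idx]_(k < h) F (fold k) = \big[op/idx]_(k < h) F k.+1.
Proof.
rewrite [RHS](reindex_inj gauss_fold_ord_inj).
by apply: eq_bigr => k _; rewrite gauss_fold_ordE.
Qed.

Lemma gauss_lemma : (a%:R : 'F_p) ^+ h = (-1) ^+ (\sum_(k < h) (h < res k))%N.
Proof.
have fact_nz : \prod_(k < h) (k.+1%:R : 'F_p) != 0.
  by apply/prodf_neq0 => k _; rewrite (Fp_nat_eq0 p_pr) gtnNdvd //; have := ltn_ord k; lia.
apply: (mulIf fact_nz); transitivity (\prod_(k < h) ((a * k.+1)%:R : 'F_p)).
  rewrite [RHS](eq_bigr (fun k : 'I_h => a%:R * k.+1%:R)) => [|k _]; last by rewrite natrM.
  by rewrite big_split /= prodr_const card_ord.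
rewrite (eq_bigr _ (fun (k : 'I_h) _ => gauss_fold_Fp k)) big_split /= prodrXr.
by rewrite (big_gauss_fold _ (fun n => (n%:R : 'F_p))).
Qed.

(* Summing [a (k + 1) = p q_k + r_k] over [k < h] and comparing with the sum of
   the [fold k], a permutation of [1..h], gives the parity statement. *)
Lemma gauss_count_parity : odd a ->
  odd (\sum_(k < h) (h < res k)) = odd (\sum_(k < h) (a * k.+1) %/ p).
Proof.
move=> a_odd.
set mu := (\sum_(k < h) _)%N; set S := (\sum_(k < h) _)%N.
set T := (\sum_(k < h) k.+1)%N; set X := (\sum_(k < h) (h < res k) * res k)%N.
have sum_a : (a * T = S * p + \sum_(k < h) res k)%N.
  rewrite big_distrr /S big_distrl -big_split /=.
  by apply: eq_bigr => k _; exact: divn_eq.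
have sum_fold : (\sum_(k < h) res k + mu * p = T + 2 * X)%N.
  rewrite /T -(big_gauss_fold addn id) /mu /X big_distrl big_distrr -!big_split /=.
  apply: eq_bigr => k _; rewrite /fold; have := gauss_res_lt k.
  by case: (leqP (res k) h) => /=; lia.
have : (a * T + mu * p = S * p + T + 2 * X)%N by lia.
move/(congr1 odd); rewrite !oddD !oddM a_odd p_odd /=.
by case: (odd T); case: (odd mu); case: (odd S); case: (odd X).
Qed.

End GaussLemma.

Lemma legendre_eisenstein p q : prime p -> odd p -> odd q -> ~~ (p %| q)%N ->
  legendre p q%:Z = (-1) ^+ (\sum_(k < p./2) (q * k.+1) %/ p)%N.
Proof.
move=> p_pr p_odd q_odd p_ndvd_q.
apply: (Fp_intr_inj_small p_pr p_odd); rewrite ?legendre_norm_le1 ?normr_sign //.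
rewrite legendre_Fp // -pmulrn gauss_lemma // rmorphXn /= rmorphN1.
by rewrite -signr_odd gauss_count_parity // signr_odd.
Qed.

Section LatticePoints.
Local Open Scope nat_scope.

Lemma sum_ord_ltn N m : \sum_(j < N) (j < m) = minn N m.
Proof.
elim: N => [|N IHN]; first by rewrite big_ord0 min0n.
by rewrite big_ord_recr /= IHN; case: (ltnP N m); lia.
Qed.

Lemma divn_lattice_count p q k : prime p -> odd p -> odd q -> ~~ (p %| q) ->
  k < p./2 -> (q * k.+1) %/ p = \sum_(j < q./2) (p * j.+1 < q * k.+1).
Proof.
move=> p_pr p_odd q_odd p_ndvd_q k_lt.
have pE := odd_halfE p_odd; have qE := odd_halfE q_odd.
have p_ndvd : ~~ (p %| q * k.+1) by rewrite prime_ndvd_mul //; lia.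
have quot_le : (q * k.+1) %/ p <= q./2.
  by rewrite -ltnS ltn_divLR ?prime_gt0 //; nia.
rewrite (eq_bigr (fun j : 'I_q./2 => (j < (q * k.+1) %/ p) : nat)) ?sum_ord_ltn; first lia.
move=> j _; rewrite ltn_neqAle leq_divRL ?prime_gt0 // [j.+1 * p]mulnC.
by case: eqP => // pj_eq; rewrite -pj_eq dvdn_mulr in p_ndvd.
Qed.

(* Counting the lattice points of the rectangle [1..p/2] x [1..q/2] on both
   sides of its diagonal, which contains none of them. *)
Lemma lattice_point_count p q : prime p -> prime q -> odd p -> odd q -> p != q ->
  \sum_(k < p./2) (q * k.+1) %/ p + \sum_(j < q./2) (p * j.+1) %/ q = p./2 * q./2.
Proof.
move=> p_pr q_pr p_odd q_odd pq.
have p_ndvd_q : ~~ (p %| q) by rewrite dvdn_prime2.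
have q_ndvd_p : ~~ (q %| p) by rewrite dvdn_prime2 // eq_sym.
rewrite (eq_bigr _ (fun k _ => divn_lattice_count p_pr p_odd q_odd p_ndvd_q (ltn_ord k))).
rewrite (eq_bigr _ (fun j _ => divn_lattice_count q_pr q_odd p_odd q_ndvd_p (ltn_ord j))).
rewrite [X in _ + X]exchange_big -big_split /=.
rewrite (eq_bigr (fun _ => q./2)) => [|k _]; first by rewrite sum_nat_const card_ord.
rewrite -big_split (eq_bigr (fun _ => 1)) => [|j _]; first by rewrite sum_nat_const card_ord muln1.
case: ltngtP => // pq_eq.
have : ~~ (p %| q * k.+1) by rewrite prime_ndvd_mul //; have := ltn_ord k; have := odd_halfE p_odd; lia.
by rewrite -pq_eq dvdn_mulr.
Qed.

End LatticePoints.

Definition pstar (q : nat) : int := (-1) ^+ q./2 * q%:Z.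

Theorem quadratic_reciprocity p q : prime p -> odd p -> prime q -> odd q -> p != q ->
  legendre p (pstar q) = legendre q p%:Z.
Proof.
move=> p_pr p_odd q_pr q_odd pq.
have p_ndvd_q : ~~ (p %| q)%N by rewrite dvdn_prime2.
have q_ndvd_p : ~~ (q %| p)%N by rewrite dvdn_prime2 // eq_sym.
rewrite /pstar legendreM // legendreX // legendreN1 // -exprM.
rewrite !legendre_eisenstein // -(lattice_point_count p_pr q_pr) //.
by rewrite -exprD addnAC addnn -muln2 exprD exprM sqrr_sign mul1r.
Qed.

Lemma prime_seq_prod N : (0 < N)%N ->
  exists2 s : seq nat, all prime s & N = (\prod_(q <- s) q)%N.
Proof.
elim: N {-2}N (leqnn N) => [|M IHM] N N_le N_gt0; first by case: N N_le N_gt0.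
have [N_gt1 | N_le1] := ltnP 1 N; last first.
  by exists [::]; [done | rewrite big_nil; lia].
have p_pr := pdiv_prime N_gt1; have p_dvd := pdiv_dvd N.
have [s s_pr sE] : exists2 s, all prime s & (N %/ pdiv N = \prod_(q <- s) q)%N.
  apply: IHM; last by rewrite divn_gt0 ?prime_gt0 // dvdn_leq.
  by rewrite -ltnS (leq_trans _ N_le) // ltn_Pdiv // prime_gt1.
exists (pdiv N :: s); first by rewrite /= p_pr.
by rewrite big_cons -sE mulnC divnK.
Qed.

Lemma pstar_mod4 q : odd q -> exists k : int, pstar q = 4 * k + 1.
Proof.
move=> q_odd; rewrite /pstar -signr_odd.
have := odd_halfE q_odd; have := odd_double_half q./2.
move: (q./2) (q./2./2) (odd q./2) => h t [] /= hE qE; rewrite ?expr1 ?expr0 ?mulN1r ?mul1r.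
  by exists (- t%:Z - 1); lia.
by exists t%:Z; lia.
Qed.

Lemma prod_pstar_mod4 s : all odd s -> exists k : int, \prod_(q <- s) pstar q = 4 * k + 1.
Proof.
elim: s => [|q s IHs] /=; first by exists 0; rewrite big_nil.
case/andP => /pstar_mod4[j qE] /IHs[k sE].
by exists (4 * j * k + j + k); rewrite big_cons qE sE; ring.
Qed.

Lemma absz_prod_pstar s : `|(\prod_(q <- s) pstar q)%R|%N = (\prod_(q <- s) q)%N.
Proof.
rewrite (big_morph absz abszM (erefl : `|1|%N = 1%N)).
by apply: eq_bigr => q _; rewrite abszMsign.
Qed.

Lemma eq_absz_mod4 (x y : int) : `|x|%N = `|y|%N ->
  (exists k, x = 4 * k + 1) -> (exists k, y = 4 * k + 1) -> x = y.
Proof. by move=> xy [k xE] [j yE]; lia. Qed.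

Lemma has_odd_count (s : seq nat) : ~ perfect_square (\prod_(q <- s) pstar q) ->
  exists2 q, q \in s & odd (count_mem q s).
Proof.
move=> not_sqr; have [/hasP // | /hasPn even_count] := boolP (has (fun q => odd (count_mem q s)) s).
case: not_sqr.
exists (\prod_(q <- undup s) pstar q ^+ (count_mem q s)./2).
rewrite -prodr_undup_exp_count -prodrXl; apply: eq_big_seq => q; rewrite mem_undup.
move=> /even_count /negbTE count_even; rewrite -exprM.
by rewrite -{1}(odd_double_half (count_mem q s)) count_even add0n -muln2.
Qed.

Lemma legendre_prod_pstar (s : seq nat) p : all prime s -> all odd s ->
  prime p -> odd p -> p \notin s ->
  legendre p (\prod_(q <- s) pstar q) = \prod_(q <- s) legendre q p%:Z.
Proof.
move=> /allP s_pr /allP s_odd p_pr p_odd p_s.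
rewrite (big_morph (legendre p) (legendreM p_pr p_odd) (legendre1 p_pr p_odd)).
apply: eq_big_seq => q qs.
apply: (quadratic_reciprocity p_pr p_odd (s_pr q qs) (s_odd q qs)).
by apply: contraNneq _ p_s => ->.
Qed.

Lemma prod_eqN1_has (I : eqType) (s : seq I) (F : I -> int) :
  (forall i, [\/ F i = 0, F i = 1 | F i = -1]) ->
  \prod_(i <- s) F i = -1 -> exists2 i, i \in s & F i = -1.
Proof.
move=> F_sign; elim: s => [|i s IHs]; first by rewrite big_nil.
rewrite big_cons; case: (F_sign i) => Fi; rewrite Fi ?mul0r ?mul1r //.
  by case/IHs => j js Fj; exists j; rewrite // in_cons js orbT.
by exists i; rewrite ?mem_head.
Qed.

Lemma legendre_descent (s : seq nat) (b : nat) :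
  all prime s -> all odd s -> (0 < b)%N -> odd b ->
  \prod_(q <- s) legendre q b%:Z = -1 ->
  exists p, [/\ prime p, odd p & legendre p (\prod_(q <- s) pstar q) = -1].
Proof.
move=> s_pr s_odd b_gt0 b_odd prod_b.
have [t t_pr bE] := prime_seq_prod b_gt0.
have t_dvd p : p \in t -> (p %| b)%N by move=> pt; rewrite bE (big_rem p pt) dvdn_mulr.
have t_notin p : p \in t -> p \notin s.
  move=> pt; apply/negP => ps; move: prod_b.
  have p_dvd_b : (p%:Z %| b%:Z)%Z by rewrite dvdzE /= t_dvd.
  by rewrite (big_rem p ps) /= legendre_dvd // mul0r.
have prod_t : \prod_(p <- t) legendre p (\prod_(q <- s) pstar q) = -1.
  rewrite -prod_b bE -natz natr_prod.
  rewrite [RHS](eq_big_seq (fun q => \prod_(p <- t) legendre q p%:Z)) => [|q qs].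
    rewrite exchange_big; apply: eq_big_seq => p pt.
    apply: legendre_prod_pstar; rewrite ?(allP t_pr) ?t_notin //.
    exact: dvdn_odd (t_dvd p pt) b_odd.
  have [q_pr q_odd] := (allP s_pr q qs, allP s_odd q qs).
  rewrite (big_morph (legendre q) (legendreM q_pr q_odd) (legendre1 q_pr q_odd)).
  by apply: eq_bigr => p _; rewrite natz.
have [p pt p_leg] := prod_eqN1_has (fun p => legendre_cases p _) prod_t.
by exists p; split; rewrite ?(allP t_pr) ?(dvdn_odd (t_dvd p pt) b_odd).
Qed.

Lemma exists_legendre_pattern (s : seq nat) q1 : all prime s -> all odd s -> q1 \in s ->
  exists b : nat, odd b /\
    forall q, q \in s -> legendre q b%:Z = if q == q1 then -1 else 1.
Proof.
move=> /allP s_pr /allP s_odd q1s.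
have [q1_pr q1_odd] := (s_pr q1 q1s, s_odd q1 q1s).
have [r r_leg] := exists_legendre_eqN1 q1_pr q1_odd.
set M := (2 * \prod_(q <- s | q != q1) q)%N.
have q1_M : coprime q1 M.
  rewrite coprimeMr coprimen2 q1_odd /= big_seq_cond.
  apply: (big_ind (coprime q1)) => [|x y|q /andP[qs q_q1]]; first exact: coprimen1.
    by rewrite coprimeMr => ->.
  by rewrite prime_coprime // dvdn_prime2 ?s_pr // eq_sym.
set b := chinese q1 M `|(r %% q1%:Z)%Z|%N 1.
have bE_q1 := chinese_modl q1_M `|(r %% q1%:Z)%Z|%N 1.
have bE_M := chinese_modr q1_M `|(r %% q1%:Z)%Z|%N 1.
have b_mod_dvdM d : (d %| M)%N -> (b = 1 %[mod d])%N.
  by move=> dM; rewrite -(modn_dvdm _ dM) bE_M modn_dvdm.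
exists b; split.
  by have := b_mod_dvdM 2%N (dvdn_mulr _ (dvdnn 2)); rewrite modn2; case: (odd b).
move=> q qs; case: eqP => [-> | q_q1].
  rewrite -r_leg; apply: (legendre_modz q1_pr q1_odd).
  have q1_nz : q1%:Z != 0 by rewrite eqz_nat -lt0n prime_gt0.
  by rewrite modz_nat bE_q1 -modz_nat gez0_abs ?modz_ge0 // modz_mod.
rewrite -(legendre1 (s_pr q qs) (s_odd q qs)).
apply: (legendre_modz (s_pr q qs) (s_odd q qs)); rewrite !modz_nat b_mod_dvdM //.
by rewrite /M dvdn_mull // (big_rem q qs) /= ifT ?dvdn_mulr //; apply/eqP.
Qed.

Lemma exists_prime_legendre_eqN1 (D : int) :
  (exists k, D = 4 * k + 1) -> ~ perfect_square D ->
  exists p, [/\ prime p, odd p & legendre p D = -1].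
Proof.
move=> D_mod4 D_nsq.
have D_gt0 : (0 < `|D|)%N by rewrite absz_gt0; apply: contraPneq D_nsq => -> []; exists 0.
have D_odd : odd `|D|%N.
  have : ~~ (2 %| D)%Z by case: D_mod4 => k ->; lia.
  by rewrite dvdzE /= dvdn2 negbK.
have [s s_pr sE] := prime_seq_prod D_gt0.
have s_odd : all odd s.
  by apply/allP => q qs; apply: dvdn_odd D_odd; rewrite sE (big_rem q qs) dvdn_mulr.
have DE : D = \prod_(q <- s) pstar q.
  by apply: eq_absz_mod4 _ D_mod4 (prod_pstar_mod4 s_odd); rewrite absz_prod_pstar.
have [q1 q1s q1_odd] : exists2 q1, q1 \in s & odd (count_mem q1 s).
  by apply: has_odd_count; rewrite -DE.
have [b [b_odd b_leg]] := exists_legendre_pattern s_pr s_odd q1s.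
rewrite DE; apply: (legendre_descent s_pr s_odd _ b_odd).
  rewrite lt0n; apply: contraTneq isT => b0.
  by move: (b_leg q1 q1s); rewrite eqxx b0 legendre_dvd ?dvdz0.
rewrite (eq_big_seq (fun q => (-1) ^+ (q == q1))) => [|q qs]; last first.
  by rewrite b_leg //; case: eqP.
have count_q1 : (\sum_(q <- s) (q == q1) = count_mem q1 s)%N.
  by rewrite -sum1_count [RHS]big_mkcond; apply: eq_bigr => q _ /=; case: eqP.
by rewrite prodrXr count_q1 -signr_odd q1_odd.
Qed.

Lemma symq_inj : injective symq.
Proof. by move=> c d /(congr1 (fun f => f 1)); rewrite /symq. Qed.

Lemma S_set_symq_dvd p m l n : S_set p m l (symq n) -> (p%:Z %| n - m)%Z.
Proof.
case=> [/symq_inj -> | [s /symq_inj ->]]; first by rewrite subrr dvdz0.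
by rewrite addrC addKr addn1 exprSr mulrA dvdz_mull.
Qed.

Lemma not_square_1_sub_4_odd (n : int) : ~~ (2 %| n)%Z -> ~ perfect_square (1 - 4 * n).
Proof.
move=> n_odd [k nE]; have := divz_eq k 4; have : (0 <= k %% 4 < 4)%Z by lia.
move: (k %/ 4)%Z (k %% 4)%Z => i c c_range kE.
have : c = 0 \/ c = 1 \/ c = 2 \/ c = 3 by lia.
by rewrite kE expr2 in nE; case=> [|[|[|]]] c_val; rewrite c_val in nE; nia.
Qed.

Theorem mainTheorem4 (n : int) (hn : n != 0) :
  (exists (p : nat) (m l : int),
      [/\ prime p, coprimez m p%:Z, coprimez l p%:Z,
          (odd p -> coprimez (1 - 4 * m) p%:Z /\ qnr (1 - 4 * m) p)
        & S_set p m l (symq n)])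
  <-> ~ perfect_square (1 - 4 * n).
Proof.
split=> [[p [m [l [p_pr m_cop _ p_odd_qnr /S_set_symq_dvd p_dvd]]]] | D_nsq].
  have [p2 | p_odd] := even_prime p_pr.
    apply: not_square_1_sub_4_odd; move: m_cop p_dvd; rewrite p2 coprimezE /=.
    by rewrite coprimen2 -[odd _]negbK -dvdn2; lia.
  move=> [k kE]; apply: (proj2 (p_odd_qnr p_odd) k); apply/eqP.
  rewrite -kE eqz_mod_dvd; have -> : 1 - 4 * m - (1 - 4 * n) = 4 * (n - m) by ring.
  exact: dvdz_mull.
have D_mod4 : exists k, 1 - 4 * n = 4 * k + 1 by exists (- n); ring.
have [p [p_pr p_odd p_leg]] := exists_prime_legendre_eqN1 D_mod4 D_nsq.
have n_cop : coprimez n p.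
  rewrite coprimezE /= coprime_sym prime_coprime //; apply/negP => p_n.
  suff : legendre p (1 - 4 * n) = legendre p 1 by rewrite p_leg legendre1.
  apply: legendre_modz => //; apply/eqP; rewrite eqz_mod_dvd addrAC subrr add0r.
  by rewrite rpredN dvdz_mull // dvdzE.
have [D_qnr D_cop] := legendre_eqN1_qnr p_pr p_leg.
by exists p, n, 1; split; rewrite ?coprimezE /= ?coprime1n //; left.
Qed.
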